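(* Let $G$ be a graph, let $R\subseteq V(G)$ be the vertex set of an induced copy of $P_3$ in $G$, and let $C\subseteq V(G)\setminus R$ be a clique in $G$ with $m\ge 2$ vertices, each of odd degree in $G$. Assume every vertex of $R$ is adjacent to every vertex of $C$. Then one can admissibly remove from $G$ a subset of $C\cup R$ such that the remaining vertices of $C\cup R$ form a clique with at most $m-1$ vertices, each of odd degree in the remaining graph.
   Context: $P_3$ denotes the path with three edges (four vertices). Removing a set $T$ of vertices from a graph $G$ is a simple admissible removal if $T$ is an independent set in $G$ and the number of edges between $T$ and $V(G)\setminus T$ is even. Removing a set of vertices is admissible if it can be realised by a sequence of simple admissible removals, each performed in the graph remaining after the previous ones. Degrees are always taken in the current remaining graph. *)

(* A finite simple graph on T is a symmetric irreflexive e : rel T.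
   The "current graph" is the induced subgraph on a vertex set S : {set T}. *)
From mathcomp Require Import all_boot.
Set Implicit Arguments. Unset Strict Implicit. Unset Printing Implicit Defensive.

Section Graphs.
Variables (T : finType) (e : rel T).

Definition simple_graph : Prop := symmetric e /\ irreflexive e.

Definition deg_in (S : {set T}) (v : T) : nat := #|[set u in S | e v u]|.

Definition independent_in (S X : {set T}) : Prop :=
  X \subset S /\ forall x y, x \in X -> y \in X -> ~~ e x y.

Definition clique (X : {set T}) : Prop :=
  forall x y, x \in X -> y \in X -> x != y -> e x y.

Definition cut_edges (S X : {set T}) : nat :=
  \sum_(x in X) #|[set u in S :\: X | e x u]|.

Definition simple_admissible (S X : {set T}) : Prop :=
  independent_in S X /\ ~~ odd (cut_edges S X).

Inductive adm : {set T} -> {set T} -> Prop :=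
| adm_refl S : adm S S
| adm_step S X S' : simple_admissible S X -> adm (S :\: X) S' -> adm S S'.

Definition induced_P3 (a b c d : T) : Prop :=
  uniq [:: a; b; c; d] /\ e a b /\ e b c /\ e c d /\
  ~~ e a c /\ ~~ e a d /\ ~~ e b d.

End Graphs.

From mathcomp Require Import all_boot zify.
Set Implicit Arguments. Unset Strict Implicit. Unset Printing Implicit Defensive.

(* Only parities matter: the degree of a vertex changes parity exactly when a
   neighbour is removed, and everything removed lies in C :|: R.  The problem
   thus becomes a one-player game on a small model, the path a-b-c-d joined to
   min(m, 4) vertices of C: a position is the set of removed vertices, a move an
   independent set of even total current degree, and the parities of a, b, c, d
   are the only data.  For each of the 16 parity patterns and 3 model sizes a
   search evaluated in the proof finds a play removing at least five of the
   m + 4 vertices of C :|: R.  When m >= 4 the clique vertices outside the model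
   are adjacent to every removed vertex, and the play removes an even number of
   vertices so that they stay odd. *)

Lemma odd_deg_setC (T : finType) (e : rel T) (D : {set T}) v :
  odd (deg_in e (~: D) v) = odd (deg_in e [set: T] v) (+) odd #|[set u in D | e v u]|.
Proof.
rewrite /deg_in -(cardsID D [set u in [set: T] | e v u]) oddD.
have -> : [set u in [set: T] | e v u] :&: D = [set u in D | e v u].
  by apply/setP => u; rewrite !inE andbC.
have -> : [set u in [set: T] | e v u] :\: D = [set u in ~: D | e v u].
  by apply/setP => u; rewrite !inE andbC.
by rewrite addbC addbA addbb.
Qed.

Lemma odd_sum_count (I : Type) (r : seq I) (F : I -> nat) :
  odd (\sum_(i <- r) F i) = odd (count (fun i => odd (F i)) r).
Proof.
elim: r => [|i r IHr]; first by rewrite big_nil.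
by rewrite big_cons /= oddD IHr; case: (odd (F i)); rewrite ?oddS ?add0n.
Qed.

Section RemovalGame.
Variables (adj : rel nat) (par : nat -> bool) (n : nat) (goal : seq nat -> bool).

Definition parity_after (D : seq nat) (i : nat) : bool :=
  par i (+) odd (count (adj i) D).

Definition vertex_seq (D : seq nat) : bool := uniq D && all (fun i => i < n) D.

Definition removable (D X : seq nat) : bool :=
  [&& vertex_seq X, all (fun x => x \notin D) X,
      all (fun x => all (fun y => ~~ adj x y) X) X
    & ~~ odd (count (parity_after D) X)].

Definition small_sets : seq (seq nat) :=
  [seq [:: i] | i <- iota 0 n] ++ [seq [:: i; j] | i <- iota 0 n, j <- iota 0 i].

Fixpoint winnable (k : nat) (D : seq nat) : bool :=
  goal D || if k is k'.+1 then
              has (fun X => removable D X && winnable k' (X ++ D)) small_sets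
            else false.

Variables (T : finType) (e : rel T) (f : nat -> T).
Hypothesis f_inj : forall i j, i < n -> j < n -> f i = f j -> i = j.
Hypothesis f_adj : forall i j, i < n -> j < n -> e (f i) (f j) = adj i j.
Hypothesis f_par : forall i, i < n -> odd (deg_in e [set: T] (f i)) = par i.

Definition img (D : seq nat) : {set T} := [set:: map f D].

Lemma mem_img D i : vertex_seq D -> i < n -> (f i \in img D) = (i \in D).
Proof.
case/andP=> _ /allP D_n i_n; rewrite inE; apply/mapP/idP => [[j jD fij]|]; last by exists i.
by rewrite (f_inj i_n (D_n j jD) fij).
Qed.

Lemma uniq_img D : vertex_seq D -> uniq (map f D).
Proof.
case/andP=> uD /allP D_n; rewrite map_inj_in_uniq // => i j iD jD.
exact: f_inj (D_n i iD) (D_n j jD).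
Qed.

Lemma card_img D : vertex_seq D -> #|img D| = size D.
Proof. by move=> vD; rewrite cardsE (card_uniqP (uniq_img vD)) size_map. Qed.

Lemma img_cat X D : img (X ++ D) = img X :|: img D.
Proof. by apply/setP => x; rewrite !inE map_cat mem_cat. Qed.

Lemma vertex_seq_filter (p : pred nat) D : vertex_seq D -> vertex_seq (filter p D).
Proof.
case/andP=> uD /allP D_n; rewrite /vertex_seq filter_uniq //.
by apply/allP => i; rewrite mem_filter => /andP[_ /D_n].
Qed.

Lemma img_neighbours D i : vertex_seq D -> i < n ->
  [set u in img D | e (f i) u] = img (filter (adj i) D).
Proof.
case/andP=> _ /allP D_n i_n; apply/setP => u; rewrite !inE.
apply/andP/mapP => [[/mapP[j jD ->] adj_ij]|[j]].
  by exists j; rewrite // mem_filter -f_adj ?adj_ij ?jD //; apply: D_n.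
by rewrite mem_filter => /andP[adj_ij jD] ->; rewrite map_f // f_adj //; apply: D_n.
Qed.

Lemma odd_deg_img D i : vertex_seq D -> i < n ->
  odd (deg_in e (~: img D) (f i)) = parity_after D i.
Proof.
move=> vD i_n; rewrite odd_deg_setC f_par // img_neighbours //.
by rewrite card_img ?vertex_seq_filter // size_filter.
Qed.

Lemma vertex_seq_cat D X : vertex_seq D -> removable D X -> vertex_seq (X ++ D).
Proof.
case/andP=> uD D_n /and4P[/andP[uX X_n] /allP X_D _ _].
rewrite /vertex_seq cat_uniq uX uD all_cat X_n D_n !andbT.
by apply/hasPn => i iD; apply/negP => /X_D; rewrite iD.
Qed.

Lemma setD_img D X : ~: img D :\: img X = ~: img (X ++ D).
Proof. by rewrite img_cat setCU setDE setIC. Qed.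

Lemma removable_admissible D X : vertex_seq D -> removable D X ->
  simple_admissible e (~: img D) (img X).
Proof.
move=> vD rDX; have vXD := vertex_seq_cat vD rDX.
have /and4P[vX /allP X_D /allP X_indep X_even] := rDX.
have /andP[_ /allP X_n] := vX.
split; first split.
- apply/subsetP => x; rewrite inE => /mapP[i iX ->].
  by rewrite inE mem_img ?X_n // X_D.
- move=> x y; rewrite !inE => /mapP[i iX ->] /mapP[j jX ->]; rewrite f_adj ?X_n //.
  exact: (allP (X_indep i iX)).
rewrite /cut_edges setD_img.
rewrite (eq_bigl (mem (map f X))) => [|x]; last by rewrite inE.
rewrite -big_uniq ?uniq_img // big_map odd_sum_count.
rewrite (eq_in_count (a2 := parity_after D)) // => i iX.
rewrite odd_deg_img ?X_n // /parity_after count_cat.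
(* X is independent, so removing it does not change the degrees inside X. *)
suff -> : count (adj i) X = 0 by [].
by apply/eqP; rewrite eqn0Ngt -has_count; apply/hasPn/allP; exact: X_indep.
Qed.

Lemma winnable_adm k D : vertex_seq D -> winnable k D ->
  exists2 D', vertex_seq D' && goal D' & adm e (~: img D) (~: img D').
Proof.
elim: k D => [|k IHk] D vD /orP[gD|]; try by exists D; rewrite ?vD //; apply: adm_refl.
case/hasP=> X _ /andP[rDX /(IHk _ (vertex_seq_cat vD rDX))[D' gD' adm_D']].
by exists D' => //; apply: adm_step (removable_admissible vD rDX) _; rewrite setD_img.
Qed.
End RemovalGame.

(* Model vertices 0, 1, 2, 3 stand for a, b, c, d and the others for vertices
   of C, which start odd: hence the default [true] of the parity lists below. *)
Definition p3_join (i j : nat) : bool :=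
  (i != j) && [|| 3 < i, 3 < j, i.+1 == j | j.+1 == i].

Definition p3_join_target (n : nat) (par : nat -> bool) (D : seq nat) : bool :=
  [&& 5 <= size D, (n == 8) ==> ~~ odd (size D),
      all (fun i => all (fun j => [|| i == j, i \in D, j \in D | p3_join i j]) (iota 0 4))
        (iota 0 4)
    & all (fun i => (i \in D) || parity_after p3_join par D i) (iota 0 n)].

Lemma p3_join_winnable n (b0 b1 b2 b3 : bool) (par := nth true [:: b0; b1; b2; b3]) :
  6 <= n <= 8 -> winnable p3_join par n (p3_join_target n par) n [::].
Proof.
rewrite {}/par => /andP[n6 n8].
have : n \in [:: 6; 7; 8] by rewrite !inE; lia.
(* Not [vm_compute]: it evaluates both arguments of [||] eagerly and would
   explore the whole search tree instead of stopping at the first win. *)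
rewrite !inE => /or3P[] /eqP ->;
by case: b0; case: b1; case: b2; case: b3; lazy.
Qed.

Section P3Clique.
Variables (T : finType) (e : rel T) (a b c d : T) (C : {set T}) (m : nat).
Hypothesis e_simple : simple_graph e.
Hypothesis abcd_P3 : induced_P3 e a b c d.
Hypothesis C_disjoint : [disjoint C & [set a; b; c; d]].
Hypothesis C_clique : clique e C.
Hypothesis card_C : #|C| = m.
Hypothesis m_ge2 : 2 <= m.
Hypothesis C_odd : forall v, v \in C -> odd (deg_in e [set: T] v).
Hypothesis R_C_adj : forall r v, r \in [set a; b; c; d] -> v \in C -> e r v.

Local Notation R := [set a; b; c; d].
Local Notation listing := ([:: a; b; c; d] ++ enum C).
Local Notation f := (nth a listing).
Local Notation n := (4 + minn m 4).
Local Notation par := (nth true [:: odd (deg_in e [set: T] a); odd (deg_in e [set: T] b);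
                        odd (deg_in e [set: T] c); odd (deg_in e [set: T] d)]).

Lemma uniq_listing : uniq listing.
Proof.
have [abcd_uniq _] := abcd_P3.
rewrite cat_uniq abcd_uniq enum_uniq andbT; apply/hasPn => x; rewrite mem_enum => xC.
by move: (disjointFr C_disjoint xC); rewrite !inE -!orbA => ->.
Qed.

Lemma mem_listing x : (x \in listing) = (x \in C :|: R).
Proof. by rewrite mem_cat mem_enum setUC !inE -!orbA. Qed.

Lemma size_listing : size listing = 4 + m.
Proof. by rewrite size_cat -cardE card_C. Qed.

Lemma n_le_size_listing : n <= size listing.
Proof. by rewrite size_listing leq_add2l geq_minl. Qed.

Lemma listing_R i : i < 4 -> f i \in R.
Proof. by case: i => [|[|[|[|i]]]] // _; rewrite /= !inE eqxx ?orbT. Qed.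

Lemma listing_C i : 3 < i < size listing -> f i \in C.
Proof.
case/andP=> i3 i_s; rewrite nth_cat ltnNge i3 /= -(mem_enum (mem C)).
by rewrite mem_nth // -(ltn_add2l 4) subnKC //; move: i_s; rewrite size_cat.
Qed.

Lemma listing_inj i j : i < n -> j < n -> f i = f j -> i = j.
Proof.
move=> i_n j_n /eqP; rewrite nth_uniq ?uniq_listing ?(leq_trans _ n_le_size_listing) //.
by move/eqP.
Qed.

Lemma listing_adj i j : i < n -> j < n -> e (f i) (f j) = p3_join i j.
Proof.
have [e_sym e_irr] := e_simple.
move=> i_n j_n; have i_s := leq_trans i_n n_le_size_listing.
have j_s := leq_trans j_n n_le_size_listing.
case: (ltnP 3 i) => i3; case: (ltnP 3 j) => j3.
- rewrite /p3_join i3 /=; case: eqVneq => [->|ij]; first exact: e_irr.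
  by apply: C_clique; rewrite ?listing_C ?i3 ?j3 //; apply: contra_neq ij; apply: listing_inj.
- rewrite /p3_join i3 /= andbT neq_ltn (leq_ltn_trans j3 i3) orbT e_sym.
  by apply: R_C_adj; rewrite ?listing_R ?listing_C ?i3.
- rewrite /p3_join j3 orbT andbT neq_ltn (leq_ltn_trans i3 j3).
  by apply: R_C_adj; rewrite ?listing_R ?listing_C ?j3.
have [_ [ab [bc [cd [not_ac [not_ad not_bd]]]]]] := abcd_P3.
have ba : e b a by rewrite e_sym.
have cb : e c b by rewrite e_sym.
have dc : e d c by rewrite e_sym.
have not_ca : ~~ e c a by rewrite e_sym.
have not_da : ~~ e d a by rewrite e_sym.
have not_db : ~~ e d b by rewrite e_sym.
case: i j {i_n j_n i_s j_s} i3 j3 => [|[|[|[|i]]]] [|[|[|[|j]]]] //= _ _;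
  by rewrite ?e_irr ?ab ?ba ?bc ?cb ?cd ?dc ?(negbTE not_ac) ?(negbTE not_ca)
     ?(negbTE not_ad) ?(negbTE not_da) ?(negbTE not_bd) ?(negbTE not_db).
Qed.

Lemma listing_par i : i < n -> odd (deg_in e [set: T] (f i)) = par i.
Proof.
case: (ltnP 3 i) => [i3 i_n|]; last by case: i => [|[|[|[|i]]]].
by rewrite C_odd ?listing_C ?i3 ?(leq_trans i_n n_le_size_listing) // nth_default.
Qed.

Lemma C_adj_CR v w : v \in C -> w \in C :|: R -> v != w -> e v w.
Proof.
have [e_sym _] := e_simple.
move=> vC; rewrite inE => /orP[wC|wR] vw; first exact: C_clique.
by rewrite e_sym; apply: R_C_adj.
Qed.

Lemma card_CR : #|C :|: R| = 4 + m.
Proof.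
rewrite -size_listing -(card_uniqP uniq_listing).
by apply: eq_card => x; rewrite mem_listing.
Qed.

Lemma nth_index_listing x : x \in C :|: R -> f (index x listing) = x.
Proof. by rewrite -mem_listing; apply: nth_index. Qed.

Lemma index_listing_R x : x \in R -> index x listing < 4.
Proof.
have -> : (x \in R) = (x \in [:: a; b; c; d]) by rewrite !inE -!orbA.
by move=> xR; rewrite index_cat xR index_mem.
Qed.

Lemma index_listing_lt x : x \in C :|: R -> n != 8 -> index x listing < n.
Proof.
move=> xCR n8; have m4 : m < 4 by apply: contraNT n8; rewrite -leqNgt => /minn_idPr ->.
by rewrite (minn_idPl (ltnW m4)) -size_listing index_mem mem_listing.
Qed.

Section Remaining.
Variable D : seq nat.
Hypotheses (D_vertices : vertex_seq n D) (D_target : p3_join_target n par D).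

Lemma img_sub_CR : img f D \subset C :|: R.
Proof.
have /andP[_ /allP D_n] := D_vertices.
apply/subsetP => x; rewrite inE => /mapP[i iD ->]; rewrite -mem_listing mem_nth //.
exact: leq_trans (D_n i iD) n_le_size_listing.
Qed.

Lemma remaining_clique : clique e (~: img f D :&: (C :|: R)).
Proof.
have [e_sym _] := e_simple.
have [_ _ R_clique _] := and4P D_target.
move=> x y; rewrite !in_setI !in_setC => /andP[xD xCR] /andP[yD yCR] xy.
case/setUP: (xCR) => [xC|xR]; first exact: C_adj_CR.
case/setUP: (yCR) => [yC|yR]; first by rewrite e_sym C_adj_CR // eq_sym.
have [x4 y4] := (index_listing_R xR, index_listing_R yR).
have x_n : index x listing < n := leq_trans x4 (leq_addr _ _).
have y_n : index y listing < n := leq_trans y4 (leq_addr _ _).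
move: xD yD xy; rewrite -(nth_index_listing xCR) -(nth_index_listing yCR).
rewrite !(mem_img listing_inj) // listing_adj //.
move=> /negbTE xD /negbTE yD xy.
have [x_iota y_iota] : index x listing \in iota 0 4 /\ index y listing \in iota 0 4.
  by rewrite !mem_iota.
move: (allP (allP R_clique _ x_iota) _ y_iota); rewrite xD yD !orFb => /orP[/eqP ij|//].
by case/eqP: xy; rewrite ij.
Qed.

Lemma remaining_card : #|~: img f D :&: (C :|: R)| <= m.-1.
Proof.
have [D5 _ _ _] := and4P D_target.
rewrite setIC -setDE cardsD (setIidPr img_sub_CR) card_CR (card_img listing_inj) //.
lia.
Qed.

Lemma remaining_odd v : v \in ~: img f D :&: (C :|: R) -> odd (deg_in e (~: img f D) v).
Proof.
have [_ D_even _ D_odd] := and4P D_target.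
rewrite in_setI in_setC => /andP[vD vCR].
case: (ltnP (index v listing) n) => [v_n|n_v].
  have [i_iota v_fi] : index v listing \in iota 0 n /\ f (index v listing) = v.
    by rewrite mem_iota nth_index_listing.
  move: vD; set i := index v listing in v_n i_iota v_fi *; rewrite -v_fi.
  rewrite (odd_deg_img listing_inj listing_adj listing_par) // (mem_img listing_inj) // => iD.
  by case/orP: (allP D_odd _ i_iota) => // /(negP iD).
have n8 : n == 8 by apply: contraLR n_v => n8; rewrite -ltnNge index_listing_lt.
have vC : v \in C.
  case/setUP: vCR => // vR; move: n_v; rewrite leqNgt.
  by rewrite (leq_trans (index_listing_R vR) (leq_addr _ _)).
rewrite odd_deg_setC C_odd //.
have -> : [set u in img f D | e v u] = img f D.
  apply/setP => u; rewrite inE andb_idr // => uD.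
  by apply: C_adj_CR => //; [apply: (subsetP img_sub_CR) | apply: contraNneq vD => ->].
by rewrite (card_img listing_inj) //; apply: (implyP D_even).
Qed.
End Remaining.

Lemma p3_clique_removal :
  exists S' : {set T},
    [/\ adm e [set: T] S',
        [set: T] :\: S' \subset C :|: R,
        clique e (S' :&: (C :|: R)),
        #|S' :&: (C :|: R)| <= m.-1
      & forall v, v \in S' :&: (C :|: R) -> odd (deg_in e S' v)].
Proof.
have n_range : 6 <= n <= 8 by lia.
have [D /andP[D_vertices D_target] adm_D] :=
  winnable_adm listing_inj listing_adj listing_par (erefl : vertex_seq n [::])
    (p3_join_winnable _ _ _ _ n_range).
exists (~: img f D); split.
- by move: adm_D; rewrite /img /= set_nil setC0.
- by rewrite setTD setCK img_sub_CR.
- exact: remaining_clique.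
- exact: remaining_card.
- exact: remaining_odd.
Qed.
End P3Clique.

Theorem mainTheorem10 (T : finType) (e : rel T) (a b c d : T) (C : {set T}) (m : nat) :
  simple_graph e ->
  induced_P3 e a b c d ->
  [disjoint C & [set a; b; c; d]] ->
  clique e C ->
  #|C| = m -> 2 <= m ->
  (forall v, v \in C -> odd (deg_in e [set: T] v)) ->
  (forall r v, r \in [set a; b; c; d] -> v \in C -> e r v) ->
  exists S' : {set T},
    [/\ adm e [set: T] S',
        [set: T] :\: S' \subset C :|: [set a; b; c; d],
        clique e (S' :&: (C :|: [set a; b; c; d])),
        #|S' :&: (C :|: [set a; b; c; d])| <= m.-1
      & forall v, v \in S' :&: (C :|: [set a; b; c; d]) -> odd (deg_in e S' v)].
Proof. exact: p3_clique_removal. Qed.
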